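(* Let $\mathbb{R}[\mathsf{x}]$ be the polynomial ring in the variables $\mathsf{x}_{ij}$, $1\le i<j\le 6$ (with $\mathsf{x}_{ji}:=\mathsf{x}_{ij}$), and let \[\mathcal{I}=\langle\mathsf{x}_{ij}^2-\mathsf{x}_{ij}:1\le i<j\le6\rangle+\langle\mathsf{x}_{ij}\mathsf{x}_{ik}\mathsf{x}_{jk}:i<j<k\in[6]\rangle+\langle(1-\mathsf{x}_{ij})(1-\mathsf{x}_{ik})(1-\mathsf{x}_{jk}):i<j<k\in[6]\rangle.\] Then \[\Bigl(2-\sum_{2\le i\le6}\mathsf{x}_{1i}\Bigr)^2+\Bigl(2-\sum_{2\le i\le6}(1-\mathsf{x}_{1i})\Bigr)^2\equiv-1\pmod{\mathcal{I}}.\] *)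

From HB Require Import structures.
From mathcomp Require Import all_boot all_algebra.
From mathcomp Require Import reals.
From mathcomp Require Import mpoly.
Set Implicit Arguments. Unset Strict Implicit. Unset Printing Implicit Defensive.
Import GRing.Theory.
Local Open Scope ring_scope.

Definition pairs6 : seq ('I_6 * 'I_6) :=
  [seq ab <- [seq ((a : 'I_6), (b : 'I_6)) | a <- enum 'I_6, b <- enum 'I_6] | (val ab.1 < val ab.2)%N].

Definition pidx (i j : 'I_6) : 'I_15 :=
  inord (index (if (i <= j)%N then (i, j) else (j, i)) pairs6).

Definition xv (R : realType) (i j : 'I_6) : {mpoly R[15]} := 'X_(pidx i j).

Definition triples6 : seq (('I_6 * 'I_6) * 'I_6) :=
  [seq t <- [seq (ij, (k : 'I_6)) | ij <- pairs6, k <- enum 'I_6] | (val t.1.2 < val t.2)%N].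

Definition in_ideal (R : comRingType) (n : nat) (gens : seq {mpoly R[n]})
    (p : {mpoly R[n]}) : Prop :=
  exists cs : seq {mpoly R[n]},
    p = \sum_(k < size gens) cs`_k * gens`_k.

Definition gensI (R : realType) : seq {mpoly R[15]} :=
  [seq xv R ij.1 ij.2 ^+ 2 - xv R ij.1 ij.2 | ij <- pairs6]
  ++ [seq xv R t.1.1 t.1.2 * xv R t.1.1 t.2 * xv R t.1.2 t.2 | t <- triples6]
  ++ [seq (1 - xv R t.1.1 t.1.2) * (1 - xv R t.1.1 t.2) * (1 - xv R t.1.2 t.2)
       | t <- triples6].

(* The polynomial (2 - sum_{2<=i<=6} x_{1i})^2 + (2 - sum_{2<=i<=6} (1 - x_{1i}))^2
   (vertex 1 is the ordinal 0). *)
Definition fB1 (R : realType) : {mpoly R[15]} :=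
  (2 - \sum_(i : 'I_6 | i != ord0) xv R ord0 i) ^+ 2
  + (2 - \sum_(i : 'I_6 | i != ord0) (1 - xv R ord0 i)) ^+ 2.

From HB Require Import structures.
From mathcomp Require Import all_boot all_algebra.
From mathcomp Require Import reals.
From mathcomp Require Import mpoly.
From mathcomp Require Import ring zify.
Set Implicit Arguments. Unset Strict Implicit. Unset Printing Implicit Defensive.
Import GRing.Theory.
Local Open Scope ring_scope.

(* The ideal I is the whole ring, which is the algebraic form of the Ramsey
   bound R(3,3) <= 6. Expanding 1 = prod_i (x_1i + (1 - x_1i)) over the five
   edges at vertex 1, every term contains three edges 1b, 1c, 1d of the same
   colour, and such a monochromatic star lies in I: either one of bc, bd, cd
   has that colour too and closes a monochromatic triangle with the star, or
   bcd is a triangle of the other colour. Hence f + 1 = (f + 1) * 1 is in I. *)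

Section IdealPredicate.
Variables (S : comPzRingType) (P : S -> Prop).
Hypotheses (P0 : P 0) (PD : forall p q, P p -> P q -> P (p + q))
  (PMl : forall p q, P p -> P (q * p)).

Lemma ideal_sum (I : Type) (r : seq I) (Q : pred I) (F : I -> S) :
  (forall i, Q i -> P (F i)) -> P (\sum_(i <- r | Q i) F i).
Proof. by move=> PF; apply: big_ind. Qed.

Lemma ideal_prod_uniq_subset (I : finType) (A : {pred I}) (s : seq I) (F : I -> S) :
  uniq s -> {subset s <= A} -> P (\prod_(i <- s) F i) -> P (\prod_(i in A) F i).
Proof.
move=> s_uniq sA Ps; rewrite (bigID (mem s)) /= mulrC; apply: PMl.
rewrite (eq_bigl (mem s)) -?big_uniq // => i; exact/andb_idl/sA.
Qed.

Lemma ideal_prod_card_gt (I : finType) (k : nat) (A : {pred I}) (F : I -> S) :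
  (forall s, uniq s -> size s = k.+1 -> P (\prod_(i <- s) F i)) ->
  (k < #|A|)%N -> P (\prod_(i in A) F i).
Proof.
move=> PF /card_geqP[s [s_uniq s_size sA]].
exact: ideal_prod_uniq_subset (PF s s_uniq s_size).
Qed.

Section Majority.
Variables (I : finType) (x : I -> S) (k : nat).
Hypothesis card_I : (k.*2 < #|I|)%N.
Hypothesis ideal_x : forall s, uniq s -> size s = k.+1 -> P (\prod_(i <- s) x i).
Hypothesis ideal_1x :
  forall s, uniq s -> size s = k.+1 -> P (\prod_(i <- s) (1 - x i)).

Lemma majority_unit : P 1.
Proof.
have -> : 1 = \prod_(i : I) (x i + (1 - x i)) by rewrite big1 // => i _; rewrite subrKC.
rewrite bigA_distr; apply: ideal_sum => J _.
rewrite (bigID (mem J)) /=.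
under eq_bigr => i iJ do rewrite iJ.
under [X in _ * X]eq_bigr => i /negbTE iJ do rewrite iJ.
have [large|small] := ltnP k #|J|.
  by rewrite mulrC; apply: PMl; apply: (ideal_prod_card_gt (k := k)).
have -> : \prod_(i | i \notin J) (1 - x i) = \prod_(i in ~: J) (1 - x i).
  by apply: eq_bigl => i; rewrite inE.
by apply: PMl; apply: (ideal_prod_card_gt (k := k)) => //; have := cardsC J; lia.
Qed.

End Majority.

Section Ramsey.
Variables (V : finType) (z : V -> V -> S).

Hypotheses (red : forall i j k, uniq [:: i; j; k] -> P (z i j * z i k * z j k))
  (blue : forall i j k, uniq [:: i; j; k] ->
     P ((1 - z i j) * (1 - z i k) * (1 - z j k))).

Lemma monochromatic_star a b c d :
  uniq [:: a; b; c; d] -> P (z a b * z a c * z a d).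
Proof.
rewrite /= !inE !negb_or => /and4P[/and3P[ab ac ad] /andP[bc bd] cd _].
have uniq3 i j k : i != j -> i != k -> j != k -> uniq [:: i; j; k].
  by move=> ij ik jk; rewrite /= !inE !negb_or ij ik jk.
(* Split on bc, bd, cd in turn: the first of them with colour z closes a
   z-triangle with the star; if there is none, bcd is a (1 - z)-triangle. *)
have -> : z a b * z a c * z a d =
    z a d * (z a b * z a c * z b c)
  + z a c * (1 - z b c) * (z a b * z a d * z b d)
  + z a b * (1 - z b c) * (1 - z b d) * (z a c * z a d * z c d)
  + z a b * z a c * z a d * ((1 - z b c) * (1 - z b d) * (1 - z c d)) by ring.
by repeat apply: PD; apply: PMl; first [apply: red | apply: blue]; apply: uniq3.
Qed.
End Ramsey.

Lemma ramsey_unit (V : finType) (z : V -> V -> S) : (5 < #|V|)%N ->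
  (forall i j k, uniq [:: i; j; k] -> P (z i j * z i k * z j k)) ->
  (forall i j k, uniq [:: i; j; k] ->
     P ((1 - z i j) * (1 - z i k) * (1 - z j k))) ->
  P 1.
Proof.
move=> card_V red blue.
have /card_gt0P[a _] : (0 < #|V|)%N by apply: leq_ltn_trans card_V.
have star (y : V -> V -> S) (s : seq {b : V | b != a}) :
    (forall b c d, uniq [:: a; b; c; d] -> P (y a b * y a c * y a d)) ->
    uniq s -> size s = 3 -> P (\prod_(b <- s) y a (val b)).
  case: s => [|b [|c [|d []]]] // star_y uniq_bcd _.
  rewrite !big_cons big_nil mulr1 mulrA; apply: star_y.
  rewrite -[[:: _; _; _]]/(map val [:: b; c; d]) cons_uniq (map_inj_uniq val_inj).
  by rewrite uniq_bcd andbT /= !inE !negb_or !(eq_sym a) (valP b) (valP c) (valP d).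
apply: (@majority_unit _ (fun b : {b : V | b != a} => z a (val b)) 2).
- by rewrite card_sig cardC1; lia.
- by move=> s; apply: star => b c d; apply: monochromatic_star.
- move=> s; apply: (star (fun i j => 1 - z i j)) => b c d.
  apply: (monochromatic_star (z := fun i j => 1 - z i j)) => i j k ijk.
    exact: blue.
  by rewrite !subKr; apply: red.
Qed.
End IdealPredicate.

Lemma triangle_from_sorted (S : comPzRingType) (Q : S -> Prop) n (w : 'I_n -> 'I_n -> S) :
  (forall i j, w i j = w j i) ->
  (forall i j k : 'I_n, (i < j < k)%N -> Q (w i j * w i k * w j k)) ->
  forall i j k, uniq [:: i; j; k] -> Q (w i j * w i k * w j k).
Proof.
move=> w_sym Q_sorted i j k.
rewrite /= !inE !negb_or => /and3P[/andP[ij ik] jk _].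
wlog lt_ij : i j k ij ik jk / (i < j)%N => [sorted_ij|].
  have [lt_ij|lt_ji|/val_inj eq_ij] := ltngtP i j; last by rewrite eq_ij eqxx in ij.
    exact: sorted_ij.
  have -> : w i j * w i k * w j k = w j i * w j k * w i k.
    by rewrite (w_sym i j); ring.
  by apply: sorted_ij; rewrite // eq_sym.
have [lt_ki|lt_ik|/val_inj eq_ki] := ltngtP k i; last by rewrite eq_ki eqxx in ik.
  have -> : w i j * w i k * w j k = w k i * w k j * w i j.
    by rewrite (w_sym i k) (w_sym j k); ring.
  by apply: Q_sorted; rewrite lt_ki.
have [lt_kj|lt_jk|/val_inj eq_kj] := ltngtP k j; last by rewrite eq_kj eqxx in jk.
  have -> : w i j * w i k * w j k = w i k * w i j * w k j.
    by rewrite (w_sym j k); ring.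
  by apply: Q_sorted; rewrite lt_ik.
by apply: Q_sorted; rewrite lt_ij.
Qed.

Section IdealMembership.
Variables (R : comNzRingType) (n : nat) (gens : seq {mpoly R[n]}).

Lemma in_ideal0 : in_ideal gens 0.
Proof. by exists [::]; rewrite big1 // => k _; rewrite nth_nil mul0r. Qed.

Lemma in_idealD p q : in_ideal gens p -> in_ideal gens q -> in_ideal gens (p + q).
Proof.
move=> [cp ->] [cq ->]; exists (mkseq (fun k => cp`_k + cq`_k) (size gens)).
by rewrite -big_split; apply: eq_bigr => k _; rewrite nth_mkseq // mulrDl.
Qed.

Lemma in_idealMl p q : in_ideal gens p -> in_ideal gens (q * p).
Proof.
move=> [c ->]; exists (mkseq (fun k => q * c`_k) (size gens)).
by rewrite mulr_sumr; apply: eq_bigr => k _; rewrite nth_mkseq // mulrA.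
Qed.

Lemma mem_in_ideal g : g \in gens -> in_ideal gens g.
Proof.
move=> g_in; exists (mkseq (fun k => (k == index g gens)%:R) (size gens)).
have g_idx : (index g gens < size gens)%N by rewrite index_mem.
rewrite (bigD1 (Ordinal g_idx)) //= big1 ?addr0.
  by rewrite nth_mkseq // eqxx mul1r nth_index.
move=> k k_neq; rewrite nth_mkseq //.
suff /negbTE -> : (k : nat) != index g gens by rewrite mul0r.
by apply: contra k_neq => /eqP k_eq; apply/eqP/val_inj.
Qed.

End IdealMembership.

Lemma xv_sym (R : realType) i j : xv R i j = xv R j i.
Proof. by rewrite /xv /pidx; case: (ltngtP i j) => // /val_inj ->. Qed.

Lemma mem_pairs6 (a b : 'I_6) : (a < b)%N -> (a, b) \in pairs6.
Proof.
move=> lt_ab; rewrite mem_filter lt_ab.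
by apply: (allpairs_f (fun a b => (a, b))); rewrite mem_enum.
Qed.

Lemma mem_triples6 (i j k : 'I_6) : (i < j < k)%N -> ((i, j), k) \in triples6.
Proof.
case/andP=> lt_ij lt_jk; rewrite mem_filter lt_jk.
apply: (allpairs_f (fun ij (k : 'I_6) => (ij, k))); last by rewrite mem_enum.
exact: mem_pairs6.
Qed.

Lemma triangle_in_gensI (R : realType) (i j k : 'I_6) : (i < j < k)%N ->
  in_ideal (gensI R) (xv R i j * xv R i k * xv R j k).
Proof.
move=> ijk; apply: mem_in_ideal; rewrite !mem_cat; apply/or3P; apply: Or32.
by apply/mapP; exists ((i, j), k); rewrite ?mem_triples6.
Qed.

Lemma cotriangle_in_gensI (R : realType) (i j k : 'I_6) : (i < j < k)%N ->
  in_ideal (gensI R) ((1 - xv R i j) * (1 - xv R i k) * (1 - xv R j k)).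
Proof.
move=> ijk; apply: mem_in_ideal; rewrite !mem_cat; apply/or3P; apply: Or33.
by apply/mapP; exists ((i, j), k); rewrite ?mem_triples6.
Qed.

Theorem lemmaB1 (R : realType) : in_ideal (gensI R) (fB1 R - (-1)).
Proof.
have unit : in_ideal (gensI R) 1.
  apply: (ramsey_unit (in_ideal0 _) (@in_idealD _ _ _) (@in_idealMl _ _ _) (z := xv R)).
  - by rewrite card_ord.
  - by apply: triangle_from_sorted; [exact: xv_sym | exact: triangle_in_gensI].
  - apply: (triangle_from_sorted (w := fun i j => 1 - xv R i j)).
      by move=> i j; rewrite xv_sym.
    exact: cotriangle_in_gensI.
by rewrite -[_ - _]mulr1; apply: in_idealMl.
Qed.
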